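(* Let $\mathcal{A}$ be a finite alphabet, $n\ge0$, and $N=[1,n]=\{1,\dots,n\}$. Then (i) $|\overline{L}_{\mathcal{A}}(n)/\mathcal{S}_{\mathcal{A}}|=|\overline{G}_{\mathcal{A}}(N)/\hat{\mathcal{S}}_{\mathcal{A}}(n+1)|=|\overline{G}_{\mathcal{A}}(N)/{\sim}|=|\overline{G}_{\mathcal{A}}(N)/{\cong}|$; (ii) $|L_{\mathcal{A}}(n)/\mathcal{S}_{\mathcal{A}}|=|G_{\mathcal{A}}(N)/\hat{\mathcal{S}}_{\mathcal{A}}(n+1)|$; (iii) $|\overline{G}_{\mathcal{A}}(N)/\hat{\mathcal{S}}_{\mathcal{A}}(n+1)|\le|G_{\mathcal{A}}(N)/{\sim}|\le|G_{\mathcal{A}}(N)/{\cong}|\le|G_{\mathcal{A}}(N)/\hat{\mathcal{S}}_{\mathcal{A}}(n+1)|$.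
   Context: $L_{\mathcal{A}}(n)$ is the set of $f:\mathcal{A}^n\to\mathcal{A}$; $\overline{L}_{\mathcal{A}}(n)$ the irreducible ones (depending on every argument). $\mathcal{S}_{\mathcal{A}}=\{1,r\}\times S_{\mathcal{A}}$ ($S_{\mathcal{A}}$ the permutations of $\mathcal{A}$) acts on rules by $\hat\nu f(w)=\nu f(\nu^{-1}w)$ (letterwise) and $\hat rf(w)=f(rw)$, $r$ reversing words. For $f:\mathcal{A}^n\to\mathcal{A}$, $\Phi^N_f(x)_i=f(x_{i+1}\dots x_{i+n})$; $G_{\mathcal{A}}(N)=\{\Phi^N_f\mid f\in L_{\mathcal{A}}(n)\}$, $\overline{G}_{\mathcal{A}}(N)=\{\Phi^N_f\mid f\in\overline{L}_{\mathcal{A}}(n)\}$. Operators on global maps: $\sigma\Phi=\sigma\circ\Phi$ with $(\sigma x)_i=x_{i+1}$; $\hat\nu\Phi(x)=\nu\Phi(\nu^{-1}x)$; $\hat r\Phi(x)=r\Phi(rx)$ with $(rx)_i=x_{-i}$. $\hat{\mathcal{S}}_{\mathcal{A}}(n+1)$ is the group generated by $\sigma^{n+1}\hat r$ and all $\hat\nu$, $\nu\in S_{\mathcal{A}}$; it acts on $G_{\mathcal{A}}(N)$ and on $\overline G_{\mathcal{A}}(N)$. $\Phi\cong\Psi$ iff $\Psi=\tau\Phi$ for some $\tau$ in the group generated by $\sigma,\hat r,\hat\nu$. Scaling: for positive rational $v$ and a global map with a representation $\Phi=\Phi^M_f$, $vM\subseteq\mathbb{Z}$, put $\hat s_v\Phi=\Phi^{vM}_f$;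 $\Phi\sim\Psi$ iff there exist global maps $\Phi',\Psi'$ and a positive rational $v$ with $\Phi\cong\Phi'$, $\Psi\cong\Psi'$, $\Psi'=\hat s_v\Phi'$. For a set $X$ of global maps, $X/{\cong}$ and $X/{\sim}$ denote the classes of the restricted relations, and $X/\hat{\mathcal{S}}_{\mathcal{A}}(n+1)$ the orbits. *)

From HB Require Import structures.
From Stdlib Require Import Relations.
From mathcomp Require Import all_boot all_order all_algebra all_fingroup.
From mathcomp Require Import boolp.
Set Implicit Arguments. Unset Strict Implicit. Unset Printing Implicit Defensive.
Import GRing.Theory Num.Theory.

(* Counting classes.  For a finite index type I, a domain D : pred I,  *)
(* a map F : I -> T (X := F @ D is the set of objects) and a relation  *)
(* R on T, [nclasses D F R] is the number of classes of the            *)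
(* equivalence relation generated by the restriction of R to X,        *)
(* i.e. |X / R|.  (Classes are recorded through their preimages in D.) *)
Definition inX {I : finType} {T : Type} (D : pred I) (F : I -> T) (x : T) : Prop :=
  exists2 i, D i & x = F i.

Definition restr {I : finType} {T : Type} (D : pred I) (F : I -> T)
  (R : T -> T -> Prop) : T -> T -> Prop :=
  fun x y => [/\ inX D F x, inX D F y & R x y].

Definition nclasses {I : finType} {T : Type} (D : pred I) (F : I -> T)
  (R : T -> T -> Prop) : nat :=
  #|[set [set j | D j && `[< clos_refl_sym_trans T (restr D F R) (F i) (F j) >]]
      | i in [set i | D i]]|.

Inductive gen_group {T : Type} (S : (T -> T) -> Prop) : (T -> T) -> Prop :=
| gg_id : gen_group S (fun x => x)
| gg_gen : forall g, S g -> gen_group S g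
| gg_comp : forall g h, gen_group S g -> gen_group S h -> gen_group S (fun x => g (h x))
| gg_inv : forall g h, gen_group S g -> (forall x, g (h x) = x) ->
             (forall x, h (g x) = x) -> gen_group S h.

Section Rules.
Variable A : finType.
Variable n : nat.

Definition rule := {ffun n.-tuple A -> A}.

Definition irreducible (f : rule) : bool :=
  [forall i : 'I_n, [exists w : n.-tuple A, [exists a : A,
     f w != f [tuple if j == i then a else tnth w j | j < n]]]].

Definition nuhat_rule (nu : {perm A}) (f : rule) : rule :=
  [ffun w => nu (f (map_tuple (nu^-1)%g w))].

Definition rhat_rule (f : rule) : rule := [ffun w => f (rev_tuple w)].

Definition rule_orbit_rel (f g : rule) : Prop :=
  exists (nu : {perm A}) (b : bool),
    g = nuhat_rule nu (if b then rhat_rule f else f).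
End Rules.

Definition config (A : Type) := int -> A.
Definition gmap (A : Type) := config A -> config A.

(* Phi^M_f with M = {m_0 < ... < m_{k-1}} given as the tuple m *)
Definition gphi {A : Type} (k : nat) (m : k.-tuple int) (f : k.-tuple A -> A) : gmap A :=
  fun x i => f [tuple x (i + tnth m j)%R | j < k].

Definition gphiN {A : finType} (n : nat) (f : rule A n) : gmap A :=
  fun x i => f [tuple x (i + (j.+1)%:Z)%R | j < n].

Definition sigma_op {A : Type} (Phi : gmap A) : gmap A := fun x i => Phi x (i + 1)%R.
Definition rvc {A : Type} (x : config A) : config A := fun i => x (- i)%R.
Definition rhat_op {A : Type} (Phi : gmap A) : gmap A := fun x => rvc (Phi (rvc x)).
Definition nuhat_op {A : finType} (nu : {perm A}) (Phi : gmap A) : gmap A :=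
  fun x i => nu (Phi (fun j => (nu^-1)%g (x j)) i).

Definition hatS_gen {A : finType} (n : nat) (g : gmap A -> gmap A) : Prop :=
  g = (fun Phi => iter n.+1 sigma_op (rhat_op Phi)) \/ exists nu, g = nuhat_op nu.

Definition hatS_rel {A : finType} (n : nat) (Phi Psi : gmap A) : Prop :=
  exists tau, gen_group (hatS_gen n) tau /\ Psi = tau Phi.

Definition cong_gen {A : finType} (g : gmap A -> gmap A) : Prop :=
  g = sigma_op \/ g = rhat_op \/ exists nu, g = nuhat_op nu.

Definition cong {A : finType} (Phi Psi : gmap A) : Prop :=
  exists tau, gen_group cong_gen tau /\ Psi = tau Phi.

(* Psi' = hat s_v Phi' : for some representation Phi' = Phi^M_f with vM in Z,
   Psi' = Phi^{vM}_f *)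
Definition scaled {A : finType} (v : rat) (Phi' Psi' : gmap A) : Prop :=
  exists (k : nat) (m m' : k.-tuple int) (f : k.-tuple A -> A),
    [/\ sorted (fun a b : int => a < b)%R m,
        (forall j, ((tnth m' j)%:~R : rat) = (v * (tnth m j)%:~R)%R),
        Phi' = gphi m f & Psi' = gphi m' f].

Definition sim {A : finType} (Phi Psi : gmap A) : Prop :=
  exists (Phi' Psi' : gmap A) (v : rat),
    [/\ cong Phi Phi', cong Psi Psi', (0 < v)%R & scaled v Phi' Psi'].

(* Every operator in the groups generated by sigma, rhat and the nuhat acts on
   global maps as Phi |-> (x, i) |-> nu (Phi (nu^-1 o x o e) (e i + k)) with
   e = +-id, and turns Phi^N_f into the global map of the rule nuhat (rhat^b f)
   on a translate of the window [1, n].  In hat S_A(n+1) the translation always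
   brings the window back to [1, n]; since f |-> Phi^N_f is injective, the
   hat S_A(n+1)-orbits are exactly the images of the S_A-orbits of rules.
   For an irreducible rule the window is the minimal neighbourhood: every
   representation Phi^M_g contains it in M, and a scaling by v > 0 keeps the
   order of M, so it carries the window onto a set of n increasing cells that
   must again be a window.  Hence ~ and ~= collapse to S_A-orbits on
   irreducible rules, irreducibility is ~-invariant, and all the claims follow
   by comparing class counts of nested equivalences. *)
From Stdlib Require Import Relations.
From mathcomp Require Import all_boot all_order all_algebra all_fingroup boolp.
From mathcomp Require Import zify.
Set Implicit Arguments. Unset Strict Implicit. Unset Printing Implicit Defensive.
Import Order.TTheory GRing.Theory Num.Theory.

Local Arguments rst_refl {A R x}.
Local Arguments rst_step {A R x y}.
Local Arguments rst_sym {A R x y}.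
Local Arguments rst_trans {A R x y z}.

Section CountingClasses.
Variable I : finType.

Lemma leq_card_imset_coarser (f g : I -> {set I}) (S : {set I}) :
  {in S &, forall i j, g i = g j -> f i = f j} -> #|f @: S| <= #|g @: S|.
Proof.
move=> gf; pose h (X : {set I}) := \bigcup_(i in S | g i == X) f i.
suff -> : f @: S = h @: (g @: S) by apply: leq_imset_card.
rewrite -imset_comp; apply: eq_in_imset => i Si /=.
apply/setP => y; apply/idP/bigcupP => [fiy | [j /andP[Sj /eqP gji]]].
  by exists i; rewrite ?Si ?eqxx.
by rewrite (gf j i Sj Si gji).
Qed.

Lemma leq_nclasses_closure T1 T2 (D1 D2 : pred I) (F1 : I -> T1) (F2 : I -> T2) R1 R2 :
  (forall i, D1 i -> D2 i) ->
  (forall i j, D1 i -> D1 j ->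
     clos_refl_sym_trans _ (restr D2 F2 R2) (F2 i) (F2 j) ->
     clos_refl_sym_trans _ (restr D1 F1 R1) (F1 i) (F1 j)) ->
  nclasses D1 F1 R1 <= nclasses D2 F2 R2.
Proof.
move=> D12 cl21; rewrite /nclasses.
set c1 := fun i => [set j | D1 j && `[< _ >]].
set c2 := fun i => [set j | D2 j && `[< _ >]].
apply: (@leq_trans #|c2 @: [set i | D1 i]|); last first.
  by apply/subset_leq_card/imsetS/subsetP => i; rewrite !inE; apply: D12.
apply: leq_card_imset_coarser => i j; rewrite !inE => D1i D1j c2ij.
have : j \in c2 j by rewrite inE D12 //=; apply/asboolP; apply: rst_refl.
rewrite -c2ij inE => /andP[_ /asboolP /(cl21 i j D1i D1j) ij].
apply/setP => l; rewrite !inE; case: (D1 l) => //=.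
apply: asbool_equiv_eq; split=> [il|jl]; first exact: rst_trans (rst_sym ij) il.
exact: rst_trans ij jl.
Qed.

Section Transfer.
Variables (T1 T2 : Type) (D1 D2 : pred I) (F1 : I -> T1) (F2 : I -> T2).
Variables (R1 : T1 -> T1 -> Prop) (R2 : T2 -> T2 -> Prop).
Hypothesis D12 : forall i, D1 i -> D2 i.
Hypothesis R2_refl : forall i, D2 i -> R2 (F2 i) (F2 i).
Hypothesis step21 : forall i j, D1 i -> D2 j ->
  R2 (F2 i) (F2 j) \/ R2 (F2 j) (F2 i) -> D1 j /\ (R1 (F1 i) (F1 j) \/ R1 (F1 j) (F1 i)).

Let cl1 := clos_refl_sym_trans _ (restr D1 F1 R1).
Let cl2 := clos_refl_sym_trans _ (restr D2 F2 R2).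

Lemma restr_step_closure i j : D1 i -> D2 j ->
  R2 (F2 i) (F2 j) \/ R2 (F2 j) (F2 i) -> D1 j /\ cl1 (F1 i) (F1 j).
Proof.
move=> D1i D2j /(step21 D1i D2j) [D1j [ij | ji]]; split => //.
  by apply: rst_step; split => //; [exists i | exists j].
by apply/rst_sym/rst_step; split => //; [exists j | exists i].
Qed.

Lemma restr_closure_transfer i j : D1 i -> D1 j -> cl2 (F2 i) (F2 j) -> cl1 (F1 i) (F1 j).
Proof.
have walk x y : clos_refl_sym_trans_1n _ (restr D2 F2 R2) x y ->
    forall i, D1 i -> x = F2 i -> exists2 j, D1 j & y = F2 j /\ cl1 (F1 i) (F1 j).
  elim=> {x y} [x | x y z xy _ IH] i' D1i' Ex.
    by exists i' => //; split => //; apply: rst_refl.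
  have [k D2k [Ey ik]] : exists2 k, D2 k & y = F2 k /\ (R2 (F2 i') (F2 k) \/ R2 (F2 k) (F2 i')).
    by case: xy => -[] => [_ [k D2k ->] | [k D2k ->] _]; rewrite Ex; exists k; auto.
  have [D1k i'k] := restr_step_closure D1i' D2k ik.
  have [j' D1j' [-> kj']] := IH k D1k Ey.
  by exists j' => //; split => //; apply: rst_trans i'k kj'.
move=> D1i D1j /clos_rst_rst1n_iff /walk /(_ i D1i erefl) [j' D1j' [Ej' ij']].
have R2j'j : R2 (F2 j') (F2 j) by rewrite -Ej'; apply/R2_refl/D12.
have [_ j'j] := restr_step_closure D1j' (D12 D1j) (or_introl R2j'j).
exact: rst_trans ij' j'j.
Qed.

Lemma leq_nclasses : nclasses D1 F1 R1 <= nclasses D2 F2 R2.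
Proof. exact: leq_nclasses_closure D12 restr_closure_transfer. Qed.
End Transfer.

Lemma leq_nclasses_sub T1 T2 (D : pred I) (F1 : I -> T1) (F2 : I -> T2) R1 R2 :
  (forall i, D i -> R2 (F2 i) (F2 i)) ->
  (forall i j, D i -> D j -> R2 (F2 i) (F2 j) -> R1 (F1 i) (F1 j)) ->
  nclasses D F1 R1 <= nclasses D F2 R2.
Proof.
move=> R2_refl R21; apply: leq_nclasses => // i j Di Dj [ij | ji].
  by split=> //; left; apply: R21.
by split=> //; right; apply: R21.
Qed.

Lemma eq_nclasses T1 T2 (D : pred I) (F1 : I -> T1) (F2 : I -> T2) R1 R2 :
  (forall i, D i -> R1 (F1 i) (F1 i)) -> (forall i, D i -> R2 (F2 i) (F2 i)) ->
  (forall i j, D i -> D j -> R1 (F1 i) (F1 j) <-> R2 (F2 i) (F2 j)) ->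
  nclasses D F1 R1 = nclasses D F2 R2.
Proof.
move=> R1_refl R2_refl R12; apply/eqP; rewrite eqn_leq !leq_nclasses_sub //.
  by move=> i j Di Dj /R12; apply.
by move=> i j Di Dj /R12; apply.
Qed.
End CountingClasses.

Section AffineActions.
Variable A : finType.
Implicit Type Phi : gmap A.

Definition flip (b : bool) (j : int) : int := if b then (- j)%R else j.

Definition affine_act (nu : {perm A}) (b : bool) (k : int) Phi : gmap A :=
  fun x i => nu (Phi (fun j => (nu^-1)%g (x (flip b j))) (flip b i + k)%R).

Lemma flipD b1 b2 j : flip b1 (flip b2 j) = flip (b1 (+) b2) j.
Proof. by case: b1; case: b2; rewrite /flip /= ?opprK. Qed.

Lemma affine_act1 Phi : affine_act 1%g false 0 Phi = Phi.
Proof.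
apply: funext => x; apply: funext => i; rewrite /affine_act /= invg1 perm1 addr0.
by congr (Phi _ _); apply: funext => j; rewrite perm1.
Qed.

Lemma affine_actM nu1 b1 k1 nu2 b2 k2 Phi :
  affine_act nu1 b1 k1 (affine_act nu2 b2 k2 Phi) =
  affine_act (nu2 * nu1)%g (b1 (+) b2) (flip b2 k1 + k2)%R Phi.
Proof.
apply: funext => x; apply: funext => i; rewrite /affine_act permM.
congr (nu1 (nu2 (Phi _ _))); first by apply: funext => j; rewrite invMg permM flipD.
by case: b1; case: b2; rewrite /flip /= ?opprD ?opprK ?addrA.
Qed.

Lemma affine_actK nu b k Phi :
  affine_act nu b k (affine_act (nu^-1)%g b (- flip b k)%R Phi) = Phi.
Proof. by rewrite affine_actM mulVg addbb subrr affine_act1. Qed.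

Lemma gen_group_affine (S : (gmap A -> gmap A) -> Prop)
    (P : {perm A} -> bool -> int -> Prop) :
  P 1%g false 0 ->
  (forall nu1 b1 k1 nu2 b2 k2, P nu1 b1 k1 -> P nu2 b2 k2 ->
      P (nu2 * nu1)%g (b1 (+) b2) (flip b2 k1 + k2)%R) ->
  (forall nu b k, P nu b k -> P (nu^-1)%g b (- flip b k)%R) ->
  (forall g, S g -> exists nu b k, P nu b k /\ g =1 affine_act nu b k) ->
  forall tau, gen_group S tau -> exists nu b k, P nu b k /\ tau =1 affine_act nu b k.
Proof.
move=> P1 PM PV PS tau; elim=> {tau}.
- by exists 1%g, false, 0%R; split=> // Phi; rewrite affine_act1.
- exact: PS.
- move=> g h _ [nu1 [b1 [k1 [P1g Eg]]]] _ [nu2 [b2 [k2 [P2h Eh]]]].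
  exists (nu2 * nu1)%g, (b1 (+) b2), (flip b2 k1 + k2)%R; split; first exact: PM.
  by move=> Phi; rewrite Eh Eg affine_actM.
- move=> g h _ [nu [b [k [Pg Eg]]]] gh hg.
  exists (nu^-1)%g, b, (- flip b k)%R; split; first exact: PV.
  by move=> Phi; rewrite -{1}(affine_actK nu b k Phi) -Eg hg.
Qed.

Lemma iter_sigma_op m Phi : iter m sigma_op Phi = fun x i => Phi x (i + m%:Z)%R.
Proof.
elim: m => [|m IH] /=; first by apply: funext => x; apply: funext => i; rewrite addr0.
rewrite IH; apply: funext => x; apply: funext => i.
by rewrite /sigma_op -addrA intS addrC.
Qed.

Lemma sigma_op_affine : sigma_op =1 affine_act 1%g false 1.
Proof.
move=> Phi; apply: funext => x; apply: funext => i; rewrite /affine_act /= invg1 perm1.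
by congr (Phi _ _); apply: funext => j; rewrite perm1.
Qed.

Lemma rhat_op_affine : rhat_op =1 affine_act 1%g true 0.
Proof.
move=> Phi; apply: funext => x; apply: funext => i.
rewrite /affine_act /rhat_op /rvc /= invg1 perm1 addr0.
by congr (Phi _ _); apply: funext => j; rewrite perm1.
Qed.

Lemma nuhat_op_affine nu : nuhat_op nu =1 affine_act nu false 0.
Proof. by move=> Phi; apply: funext => x; apply: funext => i; rewrite /affine_act addr0. Qed.

Lemma hatS_reflection_affine n Phi :
  iter n.+1 sigma_op (rhat_op Phi) = affine_act 1%g true (- (n.+1)%:Z)%R Phi.
Proof.
rewrite iter_sigma_op; apply: funext => x; apply: funext => i.
rewrite /affine_act /rhat_op /rvc /= invg1 perm1 opprD.
by congr (Phi _ _); apply: funext => j; rewrite perm1.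
Qed.

Lemma hatS_group_affine n tau : gen_group (hatS_gen n) tau ->
  exists nu b, tau =1 affine_act nu b (if b then - (n.+1)%:Z else 0)%R.
Proof.
move=> /(@gen_group_affine _ (fun nu b k => k = if b then - (n.+1)%:Z else 0)%R).
case=> //.
- move=> nu1 b1 k1 nu2 b2 k2 -> ->.
  by case: b1; case: b2; rewrite /flip /= ?oppr0 ?addr0 ?add0r ?opprK ?subrr.
- by move=> nu b k ->; case: b; rewrite /flip /= ?opprK ?oppr0.
- move=> g [-> | [nu ->]].
    by exists 1%g, true, (- (n.+1)%:Z)%R; split=> // Phi; exact: hatS_reflection_affine.
  by exists nu, false, 0%R; split=> //; exact: nuhat_op_affine.
- by move=> nu [b [k [-> E]]]; exists nu, b.
Qed.

Lemma cong_group_affine tau : gen_group cong_gen tau ->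
  exists nu b k, tau =1 affine_act nu b k.
Proof.
move=> /(@gen_group_affine _ (fun _ _ _ => True)).
case=> // [g [-> | [-> | [nu ->]]] | nu [b [k [_ E]]]].
- by exists 1%g, false, 1%R; split=> //; exact: sigma_op_affine.
- by exists 1%g, true, 0%R; split=> //; exact: rhat_op_affine.
- by exists nu, false, 0%R; split=> //; exact: nuhat_op_affine.
- by exists nu, b, k.
Qed.

Lemma hatS_group_sub_cong n tau : gen_group (@hatS_gen A n) tau -> gen_group (@cong_gen A) tau.
Proof.
elim=> {tau} [|g [-> | [nu ->]] | g h _ Gg _ Gh | g h _ Gg gh hg].
- exact: gg_id.
- have sigmaG : gen_group (@cong_gen A) sigma_op by apply: gg_gen; left.
  have rhatG : gen_group (@cong_gen A) rhat_op by apply: gg_gen; right; left.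
  elim: n => [|m IH] /=; first exact: gg_comp sigmaG rhatG.
  exact: gg_comp sigmaG IH.
- by apply: gg_gen; right; right; exists nu.
- exact: gg_comp.
- exact: gg_inv Gg gh hg.
Qed.
End AffineActions.

Lemma tnth_rev T m (w : m.-tuple T) j : tnth (rev_tuple w) j = tnth w (rev_ord j).
Proof.
by rewrite (tnth_nth (tnth w j) w (rev_ord j)) (tnth_nth (tnth w j)) /= nth_rev ?size_tuple.
Qed.

Section RuleOrbits.
Variables (A : finType) (n : nat).
Implicit Types f g : rule A n.

Definition rule_act (nu : {perm A}) (b : bool) f : rule A n :=
  nuhat_rule nu (if b then rhat_rule f else f).

Lemma rhat_ruleK : involutive (@rhat_rule A n).
Proof.
move=> f; apply/ffunP => w; rewrite !ffunE; congr (f _).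
by apply: eq_from_tnth => j; rewrite !tnth_rev rev_ordK.
Qed.

Lemma nuhat_ruleM nu mu f : nuhat_rule nu (nuhat_rule mu f) = nuhat_rule (mu * nu)%g f.
Proof.
apply/ffunP => w; rewrite !ffunE permM; congr (nu (mu (f _))).
by apply: eq_from_tnth => j; rewrite !tnth_map invMg permM.
Qed.

Lemma nuhat_rule1 f : nuhat_rule 1%g f = f.
Proof.
apply/ffunP => w; rewrite !ffunE perm1; congr (f _).
by apply: eq_from_tnth => j; rewrite !tnth_map invg1 perm1.
Qed.

Lemma rhat_nuhat_rule nu f : rhat_rule (nuhat_rule nu f) = nuhat_rule nu (rhat_rule f).
Proof.
apply/ffunP => w; rewrite !ffunE; congr (nu (f _)).
by apply: eq_from_tnth => j; rewrite !(tnth_map, tnth_rev).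
Qed.

Lemma rule_actM nu1 b1 nu2 b2 f :
  rule_act nu2 b2 (rule_act nu1 b1 f) = rule_act (nu1 * nu2)%g (b1 (+) b2) f.
Proof.
by rewrite /rule_act; case: b1; case: b2; rewrite /= ?rhat_nuhat_rule ?rhat_ruleK nuhat_ruleM.
Qed.

Lemma rule_act1 f : rule_act 1%g false f = f.
Proof. exact: nuhat_rule1. Qed.

Lemma rule_orbit_refl f : rule_orbit_rel f f.
Proof. by exists 1%g, false; rewrite nuhat_rule1. Qed.

Lemma rule_act_orbit nu1 b1 nu2 b2 f g :
  rule_act nu1 b1 f = rule_act nu2 b2 g -> rule_orbit_rel f g.
Proof.
move=> E; exists (nu1 * nu2^-1)%g, (b1 (+) b2).
rewrite -/(rule_act _ _ f) -rule_actM E rule_actM.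
by rewrite addbb mulgV rule_act1.
Qed.

Lemma nuhat_rule_map nu f w : nuhat_rule nu f (map_tuple nu w) = nu (f w).
Proof.
rewrite ffunE; congr (nu (f _)).
by apply: eq_from_tnth => j; rewrite !tnth_map permK.
Qed.

Lemma rhat_rule_rev f w : rhat_rule f (rev_tuple w) = f w.
Proof.
rewrite ffunE; congr (f _).
by apply: eq_from_tnth => j; rewrite !tnth_rev rev_ordK.
Qed.

Lemma irreducible_nuhat nu f : irreducible f -> irreducible (nuhat_rule nu f).
Proof.
move=> /forallP irr_f; apply/forallP => i.
have /existsP [w /existsP [a fwa]] := irr_f i.
apply/existsP; exists (map_tuple nu w); apply/existsP; exists (nu a).
set w' := [tuple _ | j < n].
have -> : w' = map_tuple nu [tuple if j == i then a else tnth w j | j < n].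
  apply: eq_from_tnth => j; rewrite !(tnth_map, tnth_mktuple, tnth_ord_tuple).
  by case: (j == i).
by rewrite !nuhat_rule_map (inj_eq (@perm_inj _ nu)).
Qed.

Lemma irreducible_rhat f : irreducible f -> irreducible (rhat_rule f).
Proof.
move=> /forallP irr_f; apply/forallP => i.
have /existsP [w /existsP [a fwa]] := irr_f (rev_ord i).
apply/existsP; exists (rev_tuple w); apply/existsP; exists a.
set w' := [tuple _ | j < n].
have -> : w' = rev_tuple [tuple if j == rev_ord i then a else tnth w j | j < n].
  apply: eq_from_tnth => j; rewrite !(tnth_rev, tnth_mktuple, tnth_ord_tuple).
  by rewrite (inj_eq rev_ord_inj).
by rewrite !rhat_rule_rev.
Qed.

Lemma irreducible_rule_act nu b f : irreducible f -> irreducible (rule_act nu b f).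
Proof. by move=> irr_f; apply: irreducible_nuhat; case: b => //; apply: irreducible_rhat. Qed.

Lemma irreducible_orbit f g : rule_orbit_rel f g -> irreducible f -> irreducible g.
Proof. by move=> [nu [b ->]]; apply: irreducible_rule_act. Qed.
End RuleOrbits.

Lemma sorted_lt_subset_eq d (T : porderType d) k (s t : k.-tuple T) :
  sorted <%O s -> sorted <%O t -> {subset s <= t} -> s = t.
Proof.
move=> s_sorted t_sorted st; apply: val_inj.
apply: (irr_sorted_eq lt_trans ltxx s_sorted t_sorted).
by have [] := uniq_min_size (lt_sorted_uniq s_sorted) st; rewrite !size_tuple.
Qed.

Section Windows.
Variable A : finType.

Definition window n (c : int) : n.-tuple int := [tuple (c + (j.+1)%:Z)%R | j < n].

Definition window_config k (q : k.-tuple int) (w : k.-tuple A) (a0 : A) : config A :=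
  fun d => if [pick j | tnth q j == d] is Some j then tnth w j else a0.

Lemma window_config_tnth k (q : k.-tuple int) w a0 j :
  injective (tnth q) -> window_config q w a0 (tnth q j) = tnth w j.
Proof.
move=> q_inj; rewrite /window_config; case: pickP => [j' /eqP /q_inj -> // |].
by move=> /(_ j); rewrite eqxx.
Qed.

Lemma gphi_window_config k (q : k.-tuple int) (F : k.-tuple A -> A) w a0 :
  injective (tnth q) -> gphi q F (window_config q w a0) 0 = F w.
Proof.
move=> q_inj; rewrite /gphi; congr (F _); apply: eq_from_tnth => j.
by rewrite tnth_mktuple add0r window_config_tnth.
Qed.

Lemma sorted_mktuple_lt k (f : 'I_k -> int) :
  {homo f : a b / (a < b)%N >-> (a < b)%R} -> sorted <%R [tuple f j | j < k].
Proof.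
move=> f_mono; rewrite /= sorted_map.
apply: (@sub_sorted _ (fun a b : 'I_k => a < b)%N) => [a b /f_mono // |].
by have := iota_ltn_sorted 0 k; rewrite -val_enum_ord sorted_map.
Qed.

Lemma sorted_window n c : sorted <%R (window n c).
Proof. by apply: sorted_mktuple_lt => a b; rewrite ltrD2l ltz_nat. Qed.

Lemma window_inj n c : injective (tnth (window n c)).
Proof. exact/tuple_uniqP/lt_sorted_uniq/sorted_window. Qed.

Lemma gphiN_window n (f : rule A n) : gphiN f = gphi (window n 0) f.
Proof.
apply: funext => x; apply: funext => i; rewrite /gphiN /gphi; congr (f _).
by apply: eq_from_tnth => j; rewrite !tnth_mktuple add0r.
Qed.

Lemma gphi_window_inj n c : injective (@gphi A n (window n c)).
Proof.
move=> F G FG; apply: funext => w.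
have inj := @window_inj n c.
by rewrite -(gphi_window_config F w (F w) inj) FG (gphi_window_config G w (F w) inj).
Qed.

Lemma gphiN_inj n : injective (@gphiN A n).
Proof.
move=> f g; rewrite !gphiN_window => /gphi_window_inj fg.
by apply/ffunP => w; rewrite fg.
Qed.

Lemma affine_act_gphiN n nu b k (f : rule A n) :
  affine_act nu b k (gphiN f) =
  gphi (window n (if b then - k - (n.+1)%:Z else k)%R) (rule_act nu b f).
Proof.
apply: funext => x; apply: funext => i.
rewrite /affine_act /gphiN /gphi /rule_act ffunE; congr (nu _).
case: b; rewrite ?ffunE; congr (f _); apply: eq_from_tnth => j;
  rewrite !(tnth_map, tnth_mktuple, tnth_rev, tnth_ord_tuple) /flip; congr (_ (x _)).
  by rewrite /=; have := ltn_ord j; lia.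
by rewrite addrA.
Qed.

Lemma hatS_affine_act_gphiN n nu b (f : rule A n) :
  affine_act nu b (if b then - (n.+1)%:Z else 0)%R (gphiN f) = gphiN (rule_act nu b f).
Proof. by rewrite affine_act_gphiN gphiN_window; case: b; rewrite ?opprK ?subrr. Qed.

Lemma hatS_gphiN n (f g : rule A n) :
  hatS_rel n (gphiN f) (gphiN g) <-> rule_orbit_rel f g.
Proof.
split=> [[tau [/hatS_group_affine [nu [b tauE]] fg]] | [nu [b ->]]].
  by exists nu, b; apply: gphiN_inj; rewrite fg tauE hatS_affine_act_gphiN.
case: b.
  exists (fun Phi => nuhat_op nu (iter n.+1 sigma_op (rhat_op Phi))); split.
    by apply: gg_comp; apply: gg_gen; [right; exists nu | left].
  rewrite hatS_reflection_affine (hatS_affine_act_gphiN 1%g true) nuhat_op_affine.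
  by rewrite (hatS_affine_act_gphiN nu false) rule_actM mul1g.
exists (nuhat_op nu); split; first by apply: gg_gen; right; exists nu.
by rewrite nuhat_op_affine (hatS_affine_act_gphiN nu false).
Qed.

Lemma cong_gphiN n (f : rule A n) X : cong (gphiN f) X ->
  exists nu b c, X = gphi (window n c) (rule_act nu b f).
Proof.
move=> [tau [/cong_group_affine [nu [b [k tauE]]] ->]].
by rewrite tauE affine_act_gphiN; exists nu, b, (if b then - k - (n.+1)%:Z else k)%R.
Qed.
End Windows.

Section Rigidity.
Variable A : finType.

Lemma gphi_depends k k' (F : k.-tuple A -> A) (q : k.-tuple int)
    (H : k'.-tuple A -> A) (r : k'.-tuple int) (j : 'I_k) :
  [exists w, [exists a, F w != F [tuple if l == j then a else tnth w l | l < k]]] ->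
  injective (tnth q) -> gphi q F = gphi r H -> tnth q j \in r.
Proof.
move=> /existsP [w /existsP [a Fwa]] q_inj FH; apply/negPn/negP => qj_r.
case/negP: Fwa; set x := window_config q w (F w).
set x' := fun d => if d == tnth q j then a else x d.
have -> : F [tuple if l == j then a else tnth w l | l < k] = gphi q F x' 0.
  rewrite /gphi; congr (F _); apply: eq_from_tnth => l.
  by rewrite !tnth_mktuple add0r /x' (inj_eq q_inj) /x window_config_tnth.
rewrite -[F w](gphi_window_config F w (F w) q_inj) FH /gphi; apply/eqP; congr (H _).
apply: eq_from_tnth => t; rewrite !tnth_mktuple add0r /x'.
by case: eqP => // rt; case/negP: qj_r; rewrite -rt mem_tnth.
Qed.

(* Irreducibility puts the window of F inside m1; its image q in m2 is then an
   increasing family of cells on which gphi m2 f' depends, hence inside, and so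
   equal to, the window of G. *)
Lemma gphi_window_rigid n k (F G : rule A n) c1 c2 (f' : k.-tuple A -> A)
    (m1 m2 : k.-tuple int) :
  irreducible F -> injective (tnth m1) ->
  (forall a b, tnth m1 a < tnth m1 b -> tnth m2 a < tnth m2 b)%R ->
  gphi (window n c1) F = gphi m1 f' -> gphi (window n c2) G = gphi m2 f' -> F = G.
Proof.
move=> /forallP irr_F m1_inj m12 E1 E2.
have /fin_all_exists [s sE] j : exists t, tnth (window n c1) j = tnth m1 t.
  by apply/tnthP; apply: gphi_depends (irr_F j) (@window_inj n c1) E1.
have f'E u : f' u = F [tuple tnth u (s j) | j < n].
  rewrite -(gphi_window_config f' u (f' u) m1_inj) -E1 /gphi; congr (F _).
  apply: eq_from_tnth => j; have := sE j; rewrite !tnth_mktuple add0r => ->.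
  exact: window_config_tnth.
pose q := [tuple tnth m2 (s j) | j < n].
have E2q : gphi (window n c2) G = gphi q F.
  rewrite E2; apply: funext => x; apply: funext => i; rewrite /gphi f'E; congr (F _).
  by apply: eq_from_tnth => j; rewrite !tnth_mktuple.
have q_sorted : sorted <%R q.
  by apply: sorted_mktuple_lt => a b ab; apply: m12; rewrite -!sE !tnth_mktuple ltrD2l ltz_nat.
have q_inj : injective (tnth q) by exact/tuple_uniqP/lt_sorted_uniq.
have q_window : q = window n c2.
  apply: sorted_lt_subset_eq q_sorted (sorted_window n c2) _ => _ /tnthP [j ->].
  exact: gphi_depends (irr_F j) q_inj (esym E2q).
have FG : gphi (window n c2) F = gphi (window n c2) G by rewrite E2q q_window.
by apply/ffunP => w; rewrite (gphi_window_inj FG).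
Qed.

Lemma scaled_window_eq n k (F G : rule A n) c1 c2 (m m' : k.-tuple int) f' (v : rat) :
  (0 < v)%R -> (forall j, (tnth m' j)%:~R = v * (tnth m j)%:~R :> rat)%R ->
  injective (tnth m) -> irreducible F \/ irreducible G ->
  gphi (window n c1) F = gphi m f' -> gphi (window n c2) G = gphi m' f' -> F = G.
Proof.
move=> v_gt0 m'E m_inj irr E1 E2.
have mono a b : (tnth m a < tnth m b)%R = (tnth m' a < tnth m' b)%R.
  by rewrite -[RHS](ltr_int rat) !m'E ltr_pM2l // ltr_int.
have m'_inj : injective (tnth m').
  move=> a b m'ab; apply/m_inj/(@intr_inj rat)/(mulfI (lt0r_neq0 v_gt0)).
  by rewrite -!m'E m'ab.
case: irr => [irr_F | irr_G].
  by apply: gphi_window_rigid irr_F m_inj _ E1 E2 => a b; rewrite mono.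
by apply/esym/(gphi_window_rigid irr_G m'_inj _ E2 E1) => a b; rewrite mono.
Qed.

Lemma sim_gphiN_orbit n (f g : rule A n) : irreducible f ->
  sim (gphiN f) (gphiN g) \/ sim (gphiN g) (gphiN f) -> rule_orbit_rel f g.
Proof.
move=> irr_f; case=> -[Phi' [Psi' [v [C1 C2 v_gt0 [k [m [m' [f' [m_sorted m'E EPhi EPsi]]]]]]]]];
  subst Phi' Psi'; have [nu1 [b1 [c1 E1]]] := cong_gphiN C1;
  have [nu2 [b2 [c2 E2]]] := cong_gphiN C2;
  have m_inj : injective (tnth m) by exact/tuple_uniqP/lt_sorted_uniq.
- apply: (@rule_act_orbit _ _ nu1 b1 nu2 b2).
  apply: scaled_window_eq v_gt0 m'E m_inj _ (esym E1) (esym E2).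
  by left; apply: irreducible_rule_act.
- apply: (@rule_act_orbit _ _ nu2 b2 nu1 b1); apply: esym.
  apply: scaled_window_eq v_gt0 m'E m_inj _ (esym E1) (esym E2).
  by right; apply: irreducible_rule_act.
Qed.

Lemma cong_refl (X : gmap A) : cong X X.
Proof. by exists id; split=> //; apply: gg_id. Qed.

Lemma hatS_rel_cong n (X Y : gmap A) : hatS_rel n X Y -> cong X Y.
Proof. by move=> [tau [/hatS_group_sub_cong tauG ->]]; exists tau. Qed.

Lemma cong_sim_gphiN n X (g : rule A n) : cong X (gphiN g) -> sim X (gphiN g).
Proof.
move=> Xg; exists (gphiN g), (gphiN g), 1%R; split=> //; first exact: cong_refl.
exists n, (window n 0), (window n 0), g; split; rewrite ?gphiN_window //.
  exact: sorted_window.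
by move=> j; rewrite mul1r.
Qed.

Lemma leq_nclasses_irreducible_sim n (D : pred (rule A n)) (R : gmap A -> gmap A -> Prop) :
  (forall f, irreducible f -> D f) ->
  (forall f g : rule A n, hatS_rel n (gphiN f) (gphiN g) -> R (gphiN f) (gphiN g)) ->
  nclasses (@irreducible A n) (@gphiN A n) R <= nclasses D (@gphiN A n) sim.
Proof.
move=> irrD hatS_R; apply: leq_nclasses => // [g _ | f g irr_f _ /(sim_gphiN_orbit irr_f) fg].
  exact/cong_sim_gphiN/cong_refl.
by split; [exact: irreducible_orbit fg irr_f | left; apply/hatS_R/hatS_gphiN].
Qed.
End Rigidity.

Theorem proposition12 (A : finType) (n : nat) :
  let Lbar := @irreducible A n in
  let Lall := @predT (rule A n) in
  let Phi := @gphiN A n in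
  (* (i) *)
  [/\ nclasses Lbar id (@rule_orbit_rel A n) = nclasses Lbar Phi (hatS_rel n),
      nclasses Lbar Phi (hatS_rel n) = nclasses Lbar Phi sim
    & nclasses Lbar Phi sim = nclasses Lbar Phi cong]
  (* (ii) *)
  /\ nclasses Lall id (@rule_orbit_rel A n) = nclasses Lall Phi (hatS_rel n)
  (* (iii) *)
  /\ [/\ nclasses Lbar Phi (hatS_rel n) <= nclasses Lall Phi sim,
         nclasses Lall Phi sim <= nclasses Lall Phi cong
       & nclasses Lall Phi cong <= nclasses Lall Phi (hatS_rel n)].
Proof.
move=> Lbar Lall Phi.
have hatS_refl f : hatS_rel n (Phi f) (Phi f) by apply/hatS_gphiN/rule_orbit_refl.
have cong_refl_Phi f : cong (Phi f) (Phi f) := cong_refl _.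
have orbit_hatS D : nclasses D id (@rule_orbit_rel A n) = nclasses D Phi (hatS_rel n).
  apply: eq_nclasses => // [f _ | f g _ _]; first exact: rule_orbit_refl.
  exact: iff_sym (hatS_gphiN f g).
split; [split | split; [| split]].
- exact: orbit_hatS.
- apply/eqP; rewrite eqn_leq; apply/andP; split; first exact: leq_nclasses_irreducible_sim.
  by apply: leq_nclasses_sub => // f g _ _ /hatS_rel_cong /cong_sim_gphiN.
- apply/eqP; rewrite eqn_leq; apply/andP; split.
    by apply: leq_nclasses_sub => // f g _ _; exact: cong_sim_gphiN.
  by apply: leq_nclasses_irreducible_sim => // f g; exact: hatS_rel_cong.
- exact: orbit_hatS.
- by apply: leq_nclasses_irreducible_sim => // f g; exact: hatS_rel_cong.
- by apply: leq_nclasses_sub => // f g _ _; exact: cong_sim_gphiN.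
- by apply: leq_nclasses_sub => // f g _ _; exact: hatS_rel_cong.
Qed.
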